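(* Let $I,J\in\mathbb{I}_{m,n}$ and $\ast\in\{ss,cc,tot\}$. Then $\bar d^\ast_{V_J}(I)=1$ if $I\le J$, and $\bar d^\ast_{V_J}(I)=0$ otherwise.
   Context: Fix a field $K$. For integers $m,n\ge1$, $G_{m,n}$ is the equioriented commutative $m\times n$ grid: the quiver with vertex set $\{(i,j):1\le i\le m,\ 1\le j\le n\}$ and arrows $(i,j)\to(i,j+1)$ and $(i,j)\to(i+1,j)$, bound by all commutativity relations; $\mathrm{rep}\,G_{m,n}$ is its category of finite-dimensional representations over $K$ satisfying the relations. An interval of $G_{m,n}$ is a nonempty full subquiver $I$ which is connected (as an undirected graph) and convex (whenever $x,y\in I_0$ and there are paths $x\to z$, $z\to y$ in $G_{m,n}$, then $z\in I_0$); $\mathbb{I}_{m,n}$ is the set of intervals ordered by inclusion of vertex sets. The interval representation $V_I$ has $K$ at vertices of $I$, $0$ elsewhere, identity maps on arrows inside $I$ and zero maps otherwise. Essential vertices: $I^{ss}_0$ is the set of sources and sinks of the quiver $I$; $I^{cc}_0=I_0\cap(\mathrm{pr}_1(I^{ss}_0)\times\mathrm{pr}_2(I^{ss}_0))$ with $\mathrm{pr}_1,\mathrm{pr}_2$ coordinate projections; $I^{tot}_0=I_0$. Let $KG_{m,n}$ be the $K$-linear category whose objects are the vertices and whose morphisms are $K$-linear combinations of paths modulo the commutativity relations; representations of $G_{m,n}$ are $K$-linear functors $KG_{m,n}\to\mathrm{vect}_K$. For $\ast\in\{ss,cc,tot\}$, $\mathcal{C}^\ast_I$ is the full subcategory of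 $KG_{m,n}$ on $I^\ast_0$, and the compression of $M$ is the restriction $M^\ast_I:=M|_{\mathcal{C}^\ast_I}$. The compressed multiplicity $\bar d^\ast_M(I)$ is the multiplicity of the indecomposable $(V_I)^\ast_I$ as a direct summand of $M^\ast_I$ (Krull–Schmidt). *)

From HB Require Import structures.
From mathcomp Require Import all_boot all_order all_algebra.
Set Implicit Arguments. Unset Strict Implicit. Unset Printing Implicit Defensive.
Import GRing.Theory.
Local Open Scope ring_scope.

(* Vertices of the m x n grid G_{m,n}, 0-based: (i,j) with i < m, j < n. *)
Definition gvert (m n : nat) := ('I_m * 'I_n)%type.

Definition grid_arrow (m n : nat) : rel (gvert m n) := fun x y =>
  ((x.1 == y.1 :> nat) && (y.2 == (x.2).+1 :> nat)) ||
  ((x.2 == y.2 :> nat) && (y.1 == (x.1).+1 :> nat)).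

Definition path_le (m n : nat) (x y : gvert m n) : bool :=
  connect (@grid_arrow m n) x y.

Definition undirected_in (m n : nat) (I : {set gvert m n}) : rel (gvert m n) :=
  fun x y => [&& x \in I, y \in I & grid_arrow x y || grid_arrow y x].

Definition is_interval (m n : nat) (I : {set gvert m n}) : Prop :=
  [/\ I != set0,
      (forall x y, x \in I -> y \in I -> connect (undirected_in I) x y) &
      (forall x y z, x \in I -> y \in I -> path_le x z -> path_le z y -> z \in I)].

Inductive ess_kind := SS | CC | TOT.

Definition is_source (m n : nat) (I : {set gvert m n}) (x : gvert m n) : bool :=
  [forall y in I, ~~ grid_arrow y x].
Definition is_sink (m n : nat) (I : {set gvert m n}) (x : gvert m n) : bool :=
  [forall y in I, ~~ grid_arrow x y].

Definition ss_vert (m n : nat) (I : {set gvert m n}) : {set gvert m n} :=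
  [set x in I | is_source I x || is_sink I x].

Definition cc_vert (m n : nat) (I : {set gvert m n}) : {set gvert m n} :=
  [set x in I | [exists s in ss_vert I, s.1 == x.1] &&
                [exists t in ss_vert I, t.2 == x.2]].

Definition ess_vert (k : ess_kind) (m n : nat) (I : {set gvert m n}) : {set gvert m n} :=
  match k with SS => ss_vert I | CC => cc_vert I | TOT => I end.

(* A representation of G_{m,n} = a K-linear functor KG_{m,n} -> vect_K.
   Hom_{KG}(x,y) is K.p_{xy} (p_{xy} the class of any path x->y) when a path
   exists and 0 otherwise, so the functor is given by matrices rmap x y
   (images of p_{xy}, for path_le x y), acting on row vectors v |-> v *m A.
   The values of rmap x y for ~~ path_le x y are irrelevant. *)
Record grid_rep (K : fieldType) (m n : nat) := GridRep {
  rdim : gvert m n -> nat;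
  rmap : forall x y : gvert m n, 'M[K]_(rdim x, rdim y) }.

Definition is_rep (K : fieldType) (m n : nat) (M : grid_rep K m n) : Prop :=
  (forall x, rmap M x x = 1%:M) /\
  (forall x y z, path_le x y -> path_le y z ->
     rmap M x y *m rmap M y z = rmap M x z).

Definition interval_rep (K : fieldType) (m n : nat) (I : {set gvert m n})
  : grid_rep K m n :=
  @GridRep K m n (fun x => nat_of_bool (x \in I))
    (fun x y => \matrix_(i, j) (if (x \in I) && (y \in I) then 1 else 0)).

(* Morphism of the compressions M|_{C_S} -> N|_{C_S}: components at the
   objects of S, natural w.r.t. all morphisms of the full subcategory C_S. *)
Definition is_morph_on (K : fieldType) (m n : nat) (S : {set gvert m n})
  (M N : grid_rep K m n) (phi : forall x, 'M[K]_(rdim M x, rdim N x)) : Prop :=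
  forall x y, x \in S -> y \in S -> path_le x y ->
    rmap M x y *m phi y = phi x *m rmap N x y.

(* N|_S ^{(+) k} is isomorphic to a direct summand of M|_S: there are
   f_j : N|_S -> M|_S, g_i : M|_S -> N|_S with g_i o f_j = delta_ij id. *)
Definition summand_power (K : fieldType) (m n : nat) (S : {set gvert m n})
  (N M : grid_rep K m n) (k : nat) : Prop :=
  exists (f : 'I_k -> forall x, 'M[K]_(rdim N x, rdim M x))
         (g : 'I_k -> forall x, 'M[K]_(rdim M x, rdim N x)),
    [/\ forall i, is_morph_on S (f i),
        forall i, is_morph_on S (g i) &
        forall i j x, x \in S ->
          f j x *m g i x = (if i == j then 1%:M else 0)].

(* d is the multiplicity of the (indecomposable) N|_S as a direct summand of
   M|_S: the largest d such that (N|_S)^d is a direct summand of M|_S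
   (summand_power is downward closed in k). *)
Definition summand_mult (K : fieldType) (m n : nat) (S : {set gvert m n})
  (N M : grid_rep K m n) (d : nat) : Prop :=
  summand_power S N M d /\ ~ summand_power S N M d.+1.

Definition compressed_mult (K : fieldType) (m n : nat) (k : ess_kind)
  (M : grid_rep K m n) (I : {set gvert m n}) (d : nat) : Prop :=
  summand_mult (ess_vert k I) (interval_rep K I) M d.

(** Every interval I has a source or sink (an element of ss_vert I, hence of
    every ess_vert k I) below and above each of its vertices.  At such a
    vertex s both V_I and V_J are at most one-dimensional, so a split
    inclusion of (V_I)^k into V_J over the essential vertices forces
    k <= [s \in J].  Taking k = 2 bounds the multiplicity by 1; if I is not
    contained in J, convexity of J yields a source or sink of I outside J, so
    the multiplicity is 0.  Conversely, when I \subset J the all-ones maps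
    V_I <-> V_J split V_I off V_J on I. *)

From HB Require Import structures.
From mathcomp Require Import all_boot all_order all_algebra.
Set Implicit Arguments. Unset Strict Implicit. Unset Printing Implicit Defensive.
Import GRing.Theory.

Section LinearAlgebra.
Local Open Scope ring_scope.
Variable K : fieldType.

Lemma row_free_leq (d r : nat) (A : 'M[K]_(d, r)) : row_free A -> (d <= r)%N.
Proof. by move/eqP <-; exact: rank_leq_col. Qed.

Lemma mx_summand_power_leq (k d r : nat)
    (f : 'I_k -> 'M[K]_(d, r)) (g : 'I_k -> 'M[K]_(r, d)) :
  (forall i j, f j *m g i = if i == j then 1%:M else 0) -> (k * d <= r)%N.
Proof.
move=> fg; have <- : (\sum_(i < k) d = k * d)%N by rewrite sum_nat_const card_ord.
apply: row_free_leq (\mxcol_j f j) _; apply/row_freeP; exists (\mxrow_i g i).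
rewrite mul_mxcol_mxrow -(mxdiagZ (1 : K)).
by apply/eq_mxblockP => j i; rewrite fg eq_sym conform_mx_id; case: eqP.
Qed.

Lemma mul_const_mx1 (p q r : nat) :
  (const_mx 1 : 'M[K]_(p, q)) *m (const_mx 1 : 'M_(q, r)) = const_mx q%:R.
Proof.
apply/matrixP => i j; rewrite !mxE.
under eq_bigr do rewrite !mxE mul1r.
by rewrite sumr_const card_ord.
Qed.

Lemma const_mx1_bool (b : bool) : (const_mx 1 : 'M[K]_b) = 1%:M.
Proof. by case: b; apply/matrixP => i j; rewrite ?ord1 !mxE //; case: i. Qed.

End LinearAlgebra.

Section GridIntervals.
Variables m n : nat.
Implicit Types (I J S : {set gvert m n}) (x y : gvert m n).

Lemma grid_arrow_weight_lt x y : grid_arrow x y -> (x.1 + x.2 < y.1 + y.2)%N.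
Proof.
by case/orP => /andP[/eqP e1 /eqP e2]; rewrite e1 e2 ?addnS ?addSn ltnS.
Qed.

Lemma exists_ss_vert_below I x : x \in I ->
  exists2 s, s \in ss_vert I & path_le s x.
Proof.
move=> xI; pose P := [pred y | (y \in I) && path_le y x].
have Px : P x by rewrite /= xI; apply: connect0.
case: (arg_minnP (fun y : gvert m n => y.1 + y.2)%N Px) => s /andP[sI sx] smin.
exists s => //; rewrite inE sI; apply/orP; left.
apply/forall_inP => y yI; apply/negP => ys.
have /smin : P y by rewrite /= yI; exact: connect_trans (connect1 ys) sx.
by rewrite /= leqNgt grid_arrow_weight_lt.
Qed.

Lemma exists_ss_vert_above I x : x \in I ->
  exists2 t, t \in ss_vert I & path_le x t.
Proof.
move=> xI; pose P := [pred y | (y \in I) && path_le x y].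
have Px : P x by rewrite /= xI; apply: connect0.
case: (arg_maxnP (fun y : gvert m n => y.1 + y.2)%N Px) => t /andP[tI xt] tmax.
exists t => //; rewrite inE tI; apply/orP; right.
apply/forall_inP => y yI; apply/negP => ty.
have /tmax : P y by rewrite /= yI; exact: connect_trans xt (connect1 ty).
by rewrite /= leqNgt grid_arrow_weight_lt.
Qed.

Lemma ss_vert_sub_ess_vert k I : ss_vert I \subset ess_vert k I.
Proof.
apply/subsetP => x xS; have xI : x \in I by move: xS; rewrite inE => /andP[].
case: k => //=; rewrite inE xI /=.
by apply/andP; split; apply/existsP; exists x; rewrite xS eqxx.
Qed.

Lemma ess_vert_sub k I : ess_vert k I \subset I.
Proof. by case: k => //=; apply/subsetP => x; rewrite inE => /andP[]. Qed.

Lemma ss_vert_neq0 I : I != set0 -> ss_vert I != set0.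
Proof.
by case/set0Pn => x /exists_ss_vert_below[s sS _]; apply/set0Pn; exists s.
Qed.

Lemma subset_ss_vert_convex I J :
  (forall x y z, x \in J -> y \in J -> path_le x z -> path_le z y -> z \in J) ->
  ss_vert I \subset J -> I \subset J.
Proof.
move=> convJ /subsetP ssJ; apply/subsetP => x xI.
have [s /ssJ sJ sx] := exists_ss_vert_below xI.
have [t /ssJ tJ xt] := exists_ss_vert_above xI.
exact: convJ sJ tJ sx xt.
Qed.

End GridIntervals.

Section IntervalRepresentations.
Local Open Scope ring_scope.
Variables (K : fieldType) (m n : nat).
Implicit Types (I J S : {set gvert m n}) (x : gvert m n).

Lemma interval_rep_mapE I x y : x \in I -> y \in I ->
  rmap (interval_rep K I) x y = const_mx 1.
Proof. by move=> xI yI; apply/matrixP => a b; rewrite !mxE xI yI. Qed.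

Lemma summand_power0 S (N M : grid_rep K m n) : summand_power S N M 0.
Proof. by exists (fun _ _ => 0), (fun _ _ => 0); split; case. Qed.

Lemma summand_power_leq S (N M : grid_rep K m n) k x :
  summand_power S N M k -> x \in S -> (k * rdim N x <= rdim M x)%N.
Proof.
case=> f [g [_ _ fg]] xS.
by apply: (@mx_summand_power_leq K _ _ _ (f^~ x) (g^~ x)) => i j; apply: fg.
Qed.

Lemma summand_power_ss_vert_leq k I J d :
  summand_power (ess_vert k I) (interval_rep K I) (interval_rep K J) d ->
  forall s, s \in ss_vert I -> (d <= (s \in J))%N.
Proof.
move=> /summand_power_leq dle s /(subsetP (ss_vert_sub_ess_vert k I)) sE.
by move: (dle s sE); rewrite /= (subsetP (ess_vert_sub k I) s sE) muln1.
Qed.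

Lemma interval_rep_summand S I J : S \subset I -> I \subset J ->
  summand_power S (interval_rep K I) (interval_rep K J) 1.
Proof.
move=> /subsetP SI /subsetP IJ.
exists (fun _ _ => const_mx 1), (fun _ _ => const_mx 1); split.
- move=> _ x y /SI xI /SI yI _.
  by rewrite !interval_rep_mapE ?IJ // !mul_const_mx1 /= yI (IJ x xI).
- move=> _ x y /SI xI /SI yI _.
  by rewrite !interval_rep_mapE ?IJ // !mul_const_mx1 /= xI (IJ y yI).
- move=> i j x /SI xI; rewrite !ord1 eqxx mul_const_mx1 /= (IJ x xI).
  exact: const_mx1_bool.
Qed.

End IntervalRepresentations.

Theorem mainTheorem9 (K : fieldType) (m n : nat) (hm : 0 < m) (hn : 0 < n)
  (I J : {set gvert m n}) (hI : is_interval I) (hJ : is_interval J)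
  (k : ess_kind) :
  compressed_mult k (interval_rep K J) I (if I \subset J then 1 else 0).
Proof.
case: ifP => [IJ | /negbT nIJ]; split.
- exact: interval_rep_summand (ess_vert_sub k I) IJ.
- case: hI => /ss_vert_neq0/set0Pn[s sS] _ _.
  by move=> /summand_power_ss_vert_leq/(_ s sS); case: (s \in J).
- exact: summand_power0.
- case: hJ => _ _ convJ.
  have /subsetPn[s sS sJ] : ~~ (ss_vert I \subset J).
    by apply: contra nIJ; apply: subset_ss_vert_convex.
  by move=> /summand_power_ss_vert_leq/(_ s sS); rewrite (negbTE sJ).
Qed.
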